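(* Let $q>2$, $n>1$, and let $f:H(n,q)\to\mathbb{R}$ be an additive function with $|S(f)|\le 2(q-1)q^{n-2}$. Then one of the following holds: (1) $f\equiv 0$; (2) there exist $i\in\{1,\dots,n\}$, $k\in\{0,\dots,q-1\}$ and a constant $c\neq 0$ such that $f(x)=c$ for $x\in T_k(i,n)$ and $f(x)=0$ otherwise; (3) there exist $i\ne j$ in $\{1,\dots,n\}$, $k,m\in\{0,\dots,q-1\}$ and a constant $c\ne 0$ such that $f(x)=c$ for $x\in T_k(i,n)\setminus T_m(j,n)$, $f(x)=-c$ for $x\in T_m(j,n)\setminus T_k(i,n)$, and $f(x)=0$ otherwise.
   Context: The Hamming graph $H(N,q)$ has vertex set $\{0,1,\dots,q-1\}^N$, two words being adjacent iff they differ in exactly one coordinate. For $f:H(N,q)\to\mathbb{R}$, its support is $S(f)=\{x: f(x)\ne 0\}$. $T_k(i,N)$ denotes the set of vertices of $H(N,q)$ whose $i$-th coordinate equals $k$. For $f:H(N,q)\to\mathbb{R}$ ($N\ge1$), $i\in\{1,\dots,N\}$ and $k,m\in\{0,\dots,q-1\}$, define $g_{i,k,m}:H(N-1,q)\to\mathbb{R}$ by $g_{i,k,m}(t)=f(x)-f(y)$, where $x$ and $y$ are obtained from $t$ by inserting $k$, resp. $m$, as the $i$-th coordinate. The function $f$ is called additive if all functions $g_{i,k,m}$ are constant. *)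

(* Values in an arbitrary realFieldType R (R = reals is a special case). *)
From HB Require Import structures.
From mathcomp Require Import all_boot all_order all_algebra.
Set Implicit Arguments. Unset Strict Implicit. Unset Printing Implicit Defensive.
Import Order.TTheory GRing.Theory Num.Theory.
Local Open Scope ring_scope.

(* Vertices of H(N,q): words x : 'I_N -> 'I_q (coordinates indexed 0..N-1). *)
Definition word (N q : nat) := {ffun 'I_N -> 'I_q}.

Definition ins (N q : nat) (i : 'I_N) (k : 'I_q) (t : word N.-1 q) : word N q :=
  [ffun j => match unlift i j with None => k | Some j' => t j' end].

Definition gfun (R : realFieldType) (N q : nat) (f : word N q -> R)
  (i : 'I_N) (k m : 'I_q) (t : word N.-1 q) : R :=
  f (ins i k t) - f (ins i m t).

Definition additive_fun (R : realFieldType) (N q : nat) (f : word N q -> R) : Prop :=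
  forall (i : 'I_N) (k m : 'I_q), exists c : R, forall t, gfun f i k m t = c.

Definition supp (R : realFieldType) (N q : nat) (f : word N q -> R) : {set word N q} :=
  [set x | f x != 0].

Definition T (N q : nat) (k : 'I_q) (i : 'I_N) : {set word N q} :=
  [set x : word N q | x i == k].

From HB Require Import structures.
From mathcomp Require Import all_boot all_order all_algebra.
From mathcomp Require Import zify ring lra.
Import Order.TTheory GRing.Theory Num.Theory.
Set Implicit Arguments. Unset Strict Implicit. Unset Printing Implicit Defensive.
Local Open Scope ring_scope.

(* Additivity says that f x - f (ins i (x i) t) does not depend on x i, for any fixed t.
   The support bound leaves, in each direction i, a line carrying at most one nonzero
   value, so f - e_i [x_i = k_i] does not depend on x_i for suitable k_i, e_i.  If two
   coefficients e_i, e_j are nonzero, every (i,j)-plane meets the support in at least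
   2(q-1) points, and the bound forces equality, which happens only when f vanishes off
   the two hyperplanes and e_i + e_j = 0.  Otherwise f = c + e_i [x_i = k_i], and c != 0
   would put q-1 >= 2 support points on every line in direction i. *)

Definition del N q (i : 'I_N) (x : word N q) : word N.-1 q :=
  [ffun j => x (lift i j)].

Section Insertion.
Variables (N q : nat) (i : 'I_N).

Lemma ins_at (k : 'I_q) t : ins i k t i = k.
Proof. by rewrite ffunE unlift_none. Qed.

Lemma ins_lift (k : 'I_q) t j : ins i k t (lift i j) = t j.
Proof. by rewrite ffunE liftK. Qed.

Lemma ins_del (x : word N q) : ins i (x i) (del i x) = x.
Proof. by apply/ffunP => l; rewrite ffunE; case: unliftP => [j ->|->] //; rewrite ffunE. Qed.

Lemma del_ins (k : 'I_q) t : del i (ins i k t) = t.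
Proof. by apply/ffunP => j; rewrite ffunE ins_lift. Qed.

Lemma ins_id (k k' : 'I_q) t l : l != i -> ins i k t l = ins i k' t l.
Proof. by rewrite !ffunE; case: unliftP => [j ->|->] //; rewrite eqxx. Qed.

Lemma big_ins (T : Type) (idx : T) (op : Monoid.com_law idx) (F : word N q -> T) :
  \big[op/idx]_x F x = \big[op/idx]_t \big[op/idx]_k F (ins i k t).
Proof.
rewrite pair_big /= (reindex (fun p : word N.-1 q * 'I_q => ins i p.2 p.1)) //.
apply: onW_bij; exists (fun x => (del i x, x i)) => [[t k]|x] /=.
  by rewrite ins_at del_ins.
by rewrite ins_del.
Qed.
End Insertion.

Definition indep_coord (T : Type) N q (i : 'I_N) (g : word N q -> T) :=
  forall x y : word N q, (forall l, l != i -> x l = y l) -> g x = g y.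

Lemma indep_coords_const (T : Type) N q (g : word N q -> T) :
  (forall i, indep_coord i g) -> forall x y, g x = g y.
Proof.
move=> gP x y; pose z j : word N q := [ffun l : 'I_N => if (l < j)%N then y l else x l].
suff zP j : (j <= N)%N -> g x = g (z j).
  by rewrite (zP N (leqnn N)); congr g; apply/ffunP => l; rewrite ffunE ltn_ord.
elim: j => [_|j IHj ltjN]; first by congr g; apply/ffunP => l; rewrite ffunE.
rewrite IHj ?(ltnW ltjN) //; apply: (gP (Ordinal ltjN)) => l neq_lj.
have neq_lj_nat : nat_of_ord l != j by apply: contra neq_lj => /eqP eq_lj; apply/eqP/val_inj.
by rewrite !ffunE ltnS [(l <= j)%N]leq_eqVlt (negbTE neq_lj_nat).
Qed.

Lemma indep_coord_ins2 (T : Type) N q (i : 'I_N) (j : 'I_N.-1) (g : word N q -> T) :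
    indep_coord i g -> indep_coord (lift i j) g ->
  forall s k k' b b', g (ins i k (ins j b s)) = g (ins i k' (ins j b' s)).
Proof.
move=> gi gj s k k' b b'; rewrite (gi _ (ins i k' (ins j b s))); last exact: ins_id.
apply: gj => l neq_l; have [->|neq_il] := eqVneq i l; first by rewrite !ins_at.
have [l' eq_l _] := unlift_some neq_il.
by move: neq_l; rewrite eq_l !ins_lift (inj_eq (@lift_inj _ i)); apply: ins_id.
Qed.

Section Counting.
Variable R : realFieldType.

Definition coord_ind N q (i : 'I_N) (k : 'I_q) (e : R) (x : word N q) : R :=
  if x i == k then e else 0.

Lemma indep_coord_ind N q (i l : 'I_N) (k : 'I_q) e :
  l != i -> indep_coord l (coord_ind i k e).
Proof. by move=> neq_li x y eq_xy; rewrite /coord_ind eq_xy // eq_sym. Qed.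

Lemma additive_indep_line N q (f : word N q -> R) (i : 'I_N) (t : word N.-1 q) :
  additive_fun f -> indep_coord i (fun x => f x - f (ins i (x i) t)).
Proof.
move=> fA x y eq_xy; have [c gc] := fA i (x i) (y i).
have del_xy : del i x = del i y.
  by apply/ffunP => j; rewrite !ffunE eq_xy // eq_sym neq_lift.
have := gc (del i y); have := gc t; rewrite /gfun -{1}del_xy !ins_del => *; lra.
Qed.

Lemma card_supp_lines N q (f : word N q -> R) (i : 'I_N) :
  #|supp f| = (\sum_t \sum_(k : 'I_q) ((f (ins i k t) != 0)%R : nat))%N.
Proof.
rewrite /supp -sum1dep_card big_mkcond (big_ins i).
by apply: eq_bigr => t _; apply: eq_bigr => k _; case: (_ != 0).
Qed.

Lemma count_line q (a : 'I_q) (X e : R) :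
  (\sum_(k : 'I_q) ((X + (if k == a then e else 0) != 0)%R : nat)
   = (X + e != 0)%R + q.-1 * (X != 0)%R)%N.
Proof.
rewrite (bigD1 a) //= eqxx; congr (_ + _)%N.
rewrite (eq_bigr (fun _ => ((X != 0)%R : nat))) => [|k /negbTE ->]; last by rewrite addr0.
by rewrite sum_nat_const cardC1 card_ord.
Qed.

Lemma single_nonzero q (g : 'I_q -> R) : (0 < q)%N ->
    (\sum_k ((g k != 0)%R : nat) < 2)%N ->
  exists (k0 : 'I_q) (e : R), forall k, g k = if k == k0 then e else 0.
Proof.
move=> q_gt0; have [k0 gk0 lt2|g0 _] := pickP (fun k => g k != 0); last first.
  by exists (Ordinal q_gt0), 0 => k; rewrite if_same; apply/eqP; rewrite -[_ == _]negbK g0.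
exists k0, (g k0) => k; case: eqP => [-> //|/eqP neq_kk0].
move: lt2; rewrite (bigD1 k0) //= gk0 add1n !ltnS leqn0 sum_nat_eq0 => /forallP/(_ k).
by rewrite neq_kk0 eqb0 negbK => /eqP.
Qed.

Definition plane_count q (X e1 e2 : R) : nat :=
  ((X + e2 + e1 != 0)%R + q.-1 * (X + e2 != 0)%R
   + q.-1 * ((X + e1 != 0)%R + q.-1 * (X != 0)%R))%N.

Lemma count_plane q (a1 a2 : 'I_q) (X e1 e2 : R) :
  (\sum_(b : 'I_q) \sum_(k : 'I_q)
     ((X + (if b == a2 then e2 else 0) + (if k == a1 then e1 else 0) != 0)%R : nat))%N
  = plane_count q X e1 e2.
Proof.
under eq_bigr do rewrite count_line.
rewrite (bigD1 a2) //= eqxx; congr (_ + _)%N.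
rewrite (eq_bigr (fun _ => (X + e1 != 0)%R + q.-1 * (X != 0)%R)%N) => [|b /negbTE ->];
  last by rewrite addr0.
by rewrite sum_nat_const cardC1 card_ord.
Qed.

Lemma plane_count_ge q (X e1 e2 : R) : (2 < q)%N -> e1 != 0 -> e2 != 0 ->
  (2 * (q - 1) <= plane_count q X e1 e2 ?= iff (X == 0)%R && (e1 + e2 == 0)%R)%N.
Proof.
move=> q_gt2 e1_neq0 e2_neq0; apply/leqifP; rewrite /plane_count.
have [->|X_neq0] := eqVneq X 0.
  rewrite !add0r e1_neq0 e2_neq0 [e2 + e1]addrC /=.
  by case: (e1 + e2 == 0) => /=; lia.
have [X_e1|] := eqVneq (X + e1) 0; have [X_e2|] := eqVneq (X + e2) 0 => /=; try nia.
have -> : X + e2 + e1 != 0 by apply/eqP => X_e; apply/eqP: X_neq0; lra.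
nia.
Qed.

End Counting.

Section SmallSupport.
Variables (R : realFieldType) (n q : nat) (f : word n q -> R).
Hypotheses (q_gt2 : (2 < q)%N) (n_gt1 : (1 < n)%N).
Hypothesis supp_small : (#|supp f| <= 2 * (q - 1) * q ^ (n - 2))%N.

Lemma sparse_line (i : 'I_n) :
  exists t, (\sum_(k : 'I_q) ((f (ins i k t) != 0)%R : nat) < 2)%N.
Proof.
have [/existsP //|/existsPn dense] :=
  boolP [exists t, \sum_(k : 'I_q) ((f (ins i k t) != 0)%R : nat) < 2]%N.
exfalso; have : (\sum_(t : word n.-1 q) 2 <= #|supp f|)%N.
  by rewrite (card_supp_lines f i); apply: leq_sum => t _; rewrite leqNgt dense.
rewrite sum_nat_const card_ffun !card_ord.
have -> : n.-1 = (n - 2).+1 by lia.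
have : (0 < q ^ (n - 2))%N by rewrite expn_gt0; lia.
move: supp_small; rewrite expnS; set Q := (q ^ (n - 2))%N; nia.
Qed.

Lemma const_add_coord_ind (i : 'I_n) (k : 'I_q) (c e : R) :
  (forall x, f x = c + coord_ind i k e x) -> c = 0.
Proof.
move=> fE; apply/eqP; apply: contraT => c_neq0; have [t] := sparse_line i.
rewrite (eq_bigr (fun k' => ((c + (if k' == k then e else 0) != 0)%R : nat))).
  by rewrite count_line c_neq0; lia.
by move=> k' _; rewrite fE /coord_ind ins_at.
Qed.

Lemma one_coord_ind (i : 'I_n) (k : 'I_q) (e : R) :
    indep_coord i (fun x => f x - coord_ind i k e x) ->
    (forall l, l != i -> indep_coord l f) ->
  forall x, f x = coord_ind i k e x.
Proof.
move=> fi fl; pose g x := f x - coord_ind i k e x.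
have g_const : forall x y, g x = g y.
  apply: indep_coords_const => l; have [-> //|neq_li] := eqVneq l i.
  move=> x y eq_xy; rewrite /g (fl l neq_li x y eq_xy).
  by rewrite (indep_coord_ind k e neq_li eq_xy).
have q_gt0 : (0 < q)%N by lia.
pose x0 : word n q := [ffun=> Ordinal q_gt0].
have fE x : f x = g x0 + coord_ind i k e x by rewrite -(g_const x) /g subrK.
by move=> x; rewrite fE (const_add_coord_ind fE) add0r.
Qed.

Lemma additive_line_shape (i : 'I_n) : additive_fun f ->
  exists (k : 'I_q) (e : R), indep_coord i (fun x => f x - coord_ind i k e x).
Proof.
move=> fA; have [t sparse_t] := sparse_line i.
have [k [e line_t]] := single_nonzero (ltnW (ltnW q_gt2)) sparse_t.
exists k, e => x y eq_xy; have := additive_indep_line t fA eq_xy.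
by rewrite !line_t.
Qed.

Lemma two_coord_ind (i j : 'I_n) (ki kj : 'I_q) (ei ej : R) :
    i != j -> ei != 0 -> ej != 0 ->
    indep_coord i (fun x => f x - coord_ind i ki ei x) ->
    indep_coord j (fun x => f x - coord_ind j kj ej x) ->
  ei + ej = 0 /\ forall x, f x = coord_ind i ki ei x + coord_ind j kj ej x.
Proof.
move=> neq_ij ei_neq0 ej_neq0 fi fj.
pose C x := f x - coord_ind i ki ei x - coord_ind j kj ej x.
have Ci : indep_coord i C.
  move=> x y eq_xy; have := fi x y eq_xy.
  have := indep_coord_ind kj ej neq_ij eq_xy; rewrite /C; lra.
have [j' eq_j _] := unlift_some neq_ij.
have Cj : indep_coord (lift i j') C.
  have neq_j'i : lift i j' != i by rewrite -eq_j eq_sym.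
  move=> x y eq_xy; have := indep_coord_ind ki ei neq_j'i eq_xy.
  rewrite -eq_j in eq_xy; have := fj x y eq_xy; rewrite /C; lra.
pose Cs s := C (ins i ki (ins j' kj s)).
have fE s k b : f (ins i k (ins j' b s))
    = Cs s + (if b == kj then ej else 0) + (if k == ki then ei else 0).
  rewrite /Cs -(indep_coord_ins2 Ci Cj s k ki b kj) /C /coord_ind eq_j ins_lift !ins_at.
  ring.
have card_supp_planes : #|supp f| = (\sum_s plane_count q (Cs s) ei ej)%N.
  rewrite (card_supp_lines f i) (big_ins j'); apply: eq_bigr => s _.
  by rewrite -(count_plane ki kj); apply: eq_bigr => b _; apply: eq_bigr => k _; rewrite fE.
have /geq_leqif planes_eq :=
  leqif_sum (fun s (_ : true) => plane_count_ge (Cs s) q_gt2 ei_neq0 ej_neq0).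
have /forallP planes0 : [forall (s | true), (Cs s == 0) && (ei + ej == 0)].
  rewrite -planes_eq -card_supp_planes sum_nat_const card_ffun !card_ord.
  have -> : n.-1.-1 = (n - 2)%N by lia.
  by rewrite mulnC.
have q_gt0 : (0 < q)%N by lia.
have /andP [_ /eqP ->] := planes0 [ffun=> Ordinal q_gt0]; split=> // x.
have del_x : del i x j' = x j by rewrite ffunE -eq_j.
rewrite -{1}(ins_del i x) -(ins_del j' (del i x)) del_x fE.
by have /andP [/eqP -> _] := planes0 (del j' (del i x)); rewrite /coord_ind add0r addrC.
Qed.

End SmallSupport.

Theorem theorem2 (R : realFieldType) (n q : nat) (hq : (2 < q)%N) (hn : (1 < n)%N)
  (f : word n q -> R) (hadd : additive_fun f)
  (hS : (#|supp f| <= 2 * (q - 1) * q ^ (n - 2))%N) :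
  (forall x, f x = 0)
  \/ (exists (i : 'I_n) (k : 'I_q) (c : R), c != 0 /\
        forall x, f x = (if x \in T k i then c else 0))
  \/ (exists (i j : 'I_n) (k m : 'I_q) (c : R), i != j /\ c != 0 /\
        forall x, f x = (if (x \in T k i) && (x \notin T m j) then c
                         else if (x \in T m j) && (x \notin T k i) then - c
                         else 0)).
Proof.
have [k /fin_all_exists [e fP]] :=
  fin_all_exists (fun i => additive_line_shape hq hn hS i hadd).
have [/existsP [i /existsP [j /and3P [neq_ij ei_neq0 ej_neq0]]]|no_pair] :=
  boolP [exists i, exists j, [&& i != j, e i != 0 & e j != 0]].
  have [sum_e fE] := two_coord_ind hq hn hS neq_ij ei_neq0 ej_neq0 (fP i) (fP j).
  right; right; exists i, j, (k i), (k j), (e i); split=> //; split=> // x.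
  rewrite fE /coord_ind !inE (_ : e j = - e i); last by lra.
  by case: (x i == k i); case: (x j == k j); rewrite /= ?addr0 ?add0r ?subrr.
have [i e_other] : exists i, forall l, l != i -> e l = 0.
  have [/existsP [i ei_neq0]|/existsPn e0] := boolP [exists i, e i != 0].
    exists i => l neq_li; apply/eqP; apply: contraNT no_pair => el_neq0.
    by apply/existsP; exists i; apply/existsP; exists l; rewrite eq_sym neq_li ei_neq0.
  by exists (Ordinal (ltnW hn)) => l _; apply/eqP; rewrite -[_ == _]negbK e0.
have fE : forall x, f x = coord_ind i (k i) (e i) x.
  apply: (one_coord_ind hq hn hS (fP i)) => l neq_li x y eq_xy.
  by have := fP l x y eq_xy; rewrite /coord_ind e_other // !if_same !subr0.
have [ei0|ei_neq0] := eqVneq (e i) 0.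
  by left => x; rewrite fE /coord_ind ei0 if_same.
by right; left; exists i, (k i), (e i); split => // x; rewrite fE inE.
Qed.
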